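(* For every quasi-poset $T=(A,\le_T)$, $\varepsilon'\circ\phi_{ehr_{-1}}(T)=1$ and \[\phi_{ehr_{-1}}(T)=\sum_{f\in L'(T)}\big(f^{-1}(1),\ldots,f^{-1}(\max(f))\big).\]
   Context: $\mathcal{T}op[A]$ is spanned by quasi-orders $T=(A,\le_T)$ on the finite set $A$; $x\sim_T y$ iff $x\le_T y$ and $y\le_T x$; $cl(T)$ is the number of $\sim_T$-classes. $\mathcal{C}omp[A]$ has basis the set compositions $(A_1,\ldots,A_k)$ of $A$ (nonempty pairwise disjoint blocks, union $A$); $\varepsilon'(A_1,\ldots,A_k)=\delta_{k,1}$ for $k\ge1$ and $\varepsilon'(\emptyset)=1$. Let $\phi(T)=\sum_{f\in L(T)}(f^{-1}(1),\ldots,f^{-1}(\max f))$, where $L(T)$ is the set of surjections $f:A\to\{1,\ldots,\max f\}$ with $a\le_T b\Rightarrow f(a)\le f(b)$ and ($a\le_T b$, $f(a)=f(b)$) $\Rightarrow a\sim_T b$; $L'(T)$ is the set of surjections $f$ with only the first condition. Let $\iota_{-1}(T)=(-1)^{cl(T)}T$ and $\theta_{-1}(A_1,\ldots,A_n)=(-1)^n\sum_{p\ge0}\sum_{1\le i_1<\cdots<i_p<n}(A_1\sqcup\cdots\sqcup A_{i_1},\ldots,A_{i_p+1}\sqcup\cdots\sqcup A_n)$ (with $\theta_{-1}(\emptyset)=\emptyset$). Define $\phi_{ehr_{-1}}=\theta_{-1}\circ\phi\circ\iota_{-1}$ (note $\theta_{-1}\circ\theta_{-1}=Id$). *)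

From mathcomp Require Import all_boot all_order all_algebra.
Set Implicit Arguments. Unset Strict Implicit. Unset Printing Implicit Defensive.
Import GRing.Theory.
Local Open Scope ring_scope.

Section Defs.
Variable A : finType.

Definition quasi_order (T : rel A) : Prop := reflexive T /\ transitive T.

Definition cl (T : rel A) : nat :=
  #|[set [set y | T x y && T y x] | x : A]|.

Definition is_comp (s : seq {set A}) : bool :=
  [&& all (fun X : {set A} => X != set0) s,
      pairwise (fun X Y : {set A} => [disjoint X & Y]) s &
      \bigcup_(X <- s) X == [set: A]].

(* Elements of Comp[A] (with integer coefficients): coefficient functions,
   meant to be supported on set compositions of A. *)
Definition compvec := seq {set A} -> int.

(* finite sum over all set compositions of A (they have at most #|A| blocks) *)
Definition sum_comps (F : seq {set A} -> int) : int :=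
  \sum_(n < #|A|.+1) \sum_(t : n.-tuple {set A} | is_comp t) F (val t).

(* Surjections f : A -> {1..max f}; since max f <= #|A|, values lie in 'I_(#|A|.+1). *)
Definition fmax (f : {ffun A -> 'I_#|A|.+1}) : nat := \max_(a : A) val (f a).

Definition is_surj (f : {ffun A -> 'I_#|A|.+1}) : bool :=
  [forall a, (0 < val (f a))%N] &&
  all (fun j => [exists a, val (f a) == j]) (iota 1 (fmax f)).

Definition inLp (T : rel A) (f : {ffun A -> 'I_#|A|.+1}) : bool :=
  is_surj f && [forall a, forall b, T a b ==> (val (f a) <= val (f b))%N].

Definition inL (T : rel A) (f : {ffun A -> 'I_#|A|.+1}) : bool :=
  inLp T f &&
  [forall a, forall b, (T a b && (val (f a) == val (f b))) ==> (T a b && T b a)].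

Definition comp_of (f : {ffun A -> 'I_#|A|.+1}) : seq {set A} :=
  [seq [set a | val (f a) == j] | j <- iota 1 (fmax f)].

Definition phi (T : rel A) : compvec :=
  fun C => (#|[set f | inL T f & comp_of f == C]|)%:Z.

(* merge consecutive blocks; cut k = true means a cut after block number k (1-based) *)
Fixpoint merge (D : seq {set A}) (cut : nat -> bool) (acc : {set A}) (k : nat)
  : seq {set A} :=
  match D with
  | [::] => [::]
  | [:: X] => [:: acc :|: X]
  | X :: D' => if cut k then (acc :|: X) :: merge D' cut set0 k.+1
               else merge D' cut (acc :|: X) k.+1
  end.

(* coarsening of D = (A_1,...,A_n) along the cut set {i_1<...<i_p} in {1..n-1},
   encoded as a subset I of 'I_(n-1) (i in I <-> cut after block i+1) *)
Definition coarsen (D : seq {set A}) (I : {set 'I_(size D).-1}) : seq {set A} :=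
  merge D (fun k => [exists i in I, (val i).+1 == k]) set0 1.

Definition theta_basis (D : seq {set A}) : compvec :=
  fun C => (-1) ^+ (size D) *
           (#|[set I : {set 'I_(size D).-1} | @coarsen D I == C]|)%:Z.

Definition theta (v : compvec) : compvec :=
  fun C => sum_comps (fun D => v D * theta_basis D C).

(* iota_{-1} on a basis quasi-order, then linear phi: phi(iota(T)) = (-1)^cl(T) phi(T) *)
Definition phi_ehr (T : rel A) : compvec :=
  theta (fun C => (-1) ^+ (cl T) * phi T C).

Definition eps' (v : compvec) : int :=
  sum_comps (fun C => v C * ((size C == 1%N) || (C == [::]))%:R).

Definition phi_Lp (T : rel A) : compvec :=
  fun C => (#|[set f | inLp T f & comp_of f == C]|)%:Z.

End Defs.

(* The core is the identity  sum_(f in L(T)) (-1)^(max f) = (-1)^cl(T),  proved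
   for the restrictions of T to all subsets S, by induction on |S|.  Let X be
   a maximal ~_T-class of S.  A sign-reversing involution on L(T|S) moves X
   from a level it shares with other elements to a new level of its own just
   above, and back.  The extensions it cannot move, where X is alone on a level
   that is either the first one or lies just above a predecessor of X,
   correspond by deleting X to L(T|S\X), with one level less.

   The coarsenings of the composition of f are the compositions of the
   surjections g refined by f (g a < g b implies f a < f b), so the coefficient
   of C in phi_ehr_{-1}(T) is the sum over the surjections g with composition C
   of (-1)^cl(T) sum_(f in L(T), f refines g) (-1)^(max f).  When g is monotone
   for T, these f form L(T') for the quasi-order T' = T + {(a, b) | g a < g b},
   which has the same classes as T, so the term is 1; otherwise there is no
   such f.  Finally the constant surjection is the only element of L'(T) with
   at most one block, whence eps' = 1. *)

From mathcomp Require Import all_boot all_order all_algebra zify.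
From Stdlib Require Import FunctionalExtensionality.
Set Implicit Arguments. Unset Strict Implicit. Unset Printing Implicit Defensive.
Import GRing.Theory.

Lemma bigmax_attained (I : finType) (P : pred I) (F : I -> nat) :
  0 < \max_(i | P i) F i -> exists2 i, P i & \max_(i | P i) F i = F i.
Proof.
case: (pickP P) => [i0 Pi0|P0] H; last by rewrite big_pred0 in H.
rewrite (bigmax_eq_arg _ Pi0); case: arg_maxnP => // j Pj _; by exists j.
Qed.

Lemma sum_sign_bij (I J : finType) (P : pred I) (Q : pred J)
    (wI : I -> nat) (wJ : J -> nat) (F : J -> I) (G : I -> J) :
  (forall j, Q j -> [/\ P (F j), G (F j) = j & wI (F j) = (wJ j).+1]) ->
  (forall i, P i -> Q (G i) /\ F (G i) = i) ->
  (\sum_(i | P i) (-1) ^+ wI i = - \sum_(j | Q j) (-1) ^+ wJ j :> int)%R.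
Proof.
move=> HF HG; rewrite (reindex_onto F G) => [|i /HG[] //]; rewrite -sumrN.
apply: congr_big => // j.
  apply/andP/idP => [[/HG[Qj _] /eqP <-] //|Qj].
  by have [PFj GFj _] := HF j Qj; rewrite PFj GFj.
move=> /andP[/HG[Qj _] /eqP GFj]; rewrite GFj in Qj.
by have [_ _ ->] := HF j Qj; rewrite exprS mulN1r.
Qed.

Section Levels.
Variable A : finType.
Local Notation FF := {ffun A -> 'I_#|A|.+1}.

Definition natf (f : FF) : A -> nat := fun a => f a.

Definition ordf (h : A -> nat) : FF := [ffun a => inord (h a)].

Lemma natf_inj : injective natf.
Proof. by move=> f g E; apply/ffunP=> a; apply/val_inj; exact: (congr1 (fun h => h a) E). Qed.

Lemma natf_ordf h : (forall a, h a < #|A|.+1) -> natf (ordf h) = h.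
Proof. by move=> H; apply: functional_extensionality => a; rewrite /natf ffunE inordK. Qed.

Lemma ordf_natf f : ordf (natf f) = f.
Proof. by apply/ffunP => a; apply/val_inj; rewrite ffunE inord_val. Qed.

End Levels.

Section StrictExtensions.
Variables (A : finType) (T : rel A).
Hypotheses (Trefl : reflexive T) (Ttr : transitive T).
Local Notation FF := {ffun A -> 'I_#|A|.+1}.

(* [h] is an element of L(T) for the restriction of [T] to [S], with [m]
   levels, extended by [0] outside [S]. *)
Definition strict_ext (S : {set A}) (h : A -> nat) (m : nat) : Prop :=
  [/\ forall a, a \notin S -> h a = 0,
      forall a, a \in S -> 0 < h a <= m,
      forall j, 0 < j <= m -> exists2 a, a \in S & h a = j,
      forall a b, a \in S -> b \in S -> T a b -> h a <= h b &
      forall a b, a \in S -> b \in S -> T a b -> h a = h b -> T b a].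

Definition strict_extb (S : {set A}) (f : FF) (m : nat) : bool :=
  [&& [forall a, (a \notin S) ==> (f a == 0 :> nat)],
      [forall a, (a \in S) ==> (0 < f a <= m)],
      all (fun j => [exists a, (a \in S) && (f a == j :> nat)]) (iota 1 m),
      [forall a, forall b, [&& a \in S, b \in S & T a b] ==> (f a <= f b)] &
      [forall a, forall b, [&& a \in S, b \in S, T a b & (f a == f b :> nat)] ==> T b a]].

Lemma strict_extP S f m : reflect (strict_ext S (natf f) m) (strict_extb S f m).
Proof.
rewrite /natf.
apply: (iffP and5P) =>
  [[/forallP H1 /forallP H2 /allP H3 /forallP H4 /forallP H5]|[H1 H2 H3 H4 H5]]; split.
- by move=> a aS; apply/eqP; move/implyP: (H1 a); apply.
- by move=> a aS; move/implyP: (H2 a); apply.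
- move=> j hj; have: j \in iota 1 m by rewrite mem_iota; lia.
  by move/H3/existsP=> [a /andP[aS /eqP ea]]; exists a.
- by move=> a b aS bS tab; move/forallP: (H4 a) => /(_ b)/implyP; apply; rewrite aS bS tab.
- move=> a b aS bS tab eab; move/forallP: (H5 a) => /(_ b)/implyP; apply.
  by rewrite aS bS tab eab eqxx.
- by apply/forallP=> a; apply/implyP=> /H1 ->.
- by apply/forallP=> a; apply/implyP=> /H2.
- apply/allP=> j; rewrite mem_iota => hj; have [a aS ea] := H3 j ltac:(lia).
  by apply/existsP; exists a; rewrite aS ea eqxx.
- by apply/forallP=> a; apply/forallP=> b; apply/implyP=> /and3P[aS bS tab]; exact: H4.
- by apply/forallP=> a; apply/forallP=> b; apply/implyP=> /and4P[aS bS tab /eqP eab]; exact: H5.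
Qed.

Lemma strict_ext_le S h m : strict_ext S h m -> forall a, h a <= m.
Proof. by case=> H1 H2 _ _ _ a; case: (boolP (a \in S)) => [/H2|/H1->//]; lia. Qed.

Lemma strict_ext_max S h m : strict_ext S h m -> \max_(a in S) h a = m.
Proof.
move=> E; have Hle := strict_ext_le E; case: E => _ _ H3 _ _.
apply/eqP; rewrite eqn_leq; apply/andP; split; first by apply/bigmax_leqP => a _.
case: m H3 Hle => [//|m] H3 _; have [a aS <-] := H3 m.+1 ltac:(lia).
exact: leq_bigmax_cond.
Qed.

Lemma strict_ext_card S h m : strict_ext S h m -> m <= #|S|.
Proof.
case=> _ _ H3 _ _; rewrite -(size_iota 1 m) -(size_image h S).
apply: uniq_leq_size; first exact: iota_uniq.
move=> j; rewrite mem_iota => hj; have [a aS <-] := H3 j ltac:(lia).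
exact: image_f.
Qed.

Lemma strict_ext_lt S h m : strict_ext S h m -> forall a, h a < #|A|.+1.
Proof.
move=> E a; have := strict_ext_le E a; have := strict_ext_card E.
have : #|S| <= #|A| := max_card _; lia.
Qed.

Definition level_max (S : {set A}) (f : FF) : nat := \max_(a in S) natf f a.

Definition in_ext (S : {set A}) (f : FF) : bool := strict_extb S f (level_max S f).

Lemma in_extP S f : reflect (strict_ext S (natf f) (level_max S f)) (in_ext S f).
Proof. exact: strict_extP. Qed.

Lemma strict_ext_natf S f m :
  strict_ext S (natf f) m -> in_ext S f /\ level_max S f = m.
Proof.
by move=> E; have Em := strict_ext_max E; split; [apply/in_extP; rewrite /level_max Em|].
Qed.

Lemma strict_ext_ordf S h m :
  strict_ext S h m -> [/\ natf (ordf h) = h, in_ext S (ordf h) & level_max S (ordf h) = m].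
Proof.
move=> E; have Eh := natf_ordf (strict_ext_lt E).
by have [] := @strict_ext_natf S (ordf h) m; rewrite ?Eh.
Qed.

Definition ext_sum (S : {set A}) : int :=
  (\sum_(f | in_ext S f) (-1) ^+ level_max S f)%R.

Definition cl_on (S : {set A}) : nat :=
  #|[set [set y in S | T x y && T y x] | x in S]|.

Lemma exists_maximal (S : {set A}) : S != set0 ->
  exists2 x, x \in S & forall y, y \in S -> T x y -> T y x.
Proof.
case/set0Pn => x1 x1S; pose up x := [set y in S | T x y].
have [x xS xmin] := arg_minnP (fun x => #|up x|) x1S.
exists x => // y yS txy.
have sub : up y \subset up x.
  by apply/subsetP=> z; rewrite !inE => /andP[zS tyz]; rewrite zS (Ttr txy tyz).
have eq : up y = up x by apply/eqP; rewrite eqEcard sub xmin.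
have : x \in up y by rewrite eq inE Trefl andbT.
by rewrite inE => /andP[].
Qed.

Section TopClass.
Variables (S : {set A}) (x0 : A).
Hypotheses (x0S : x0 \in S) (x0_max : forall y, y \in S -> T x0 y -> T y x0).

Definition top_class := [set y in S | T x0 y && T y x0].
Local Notation X := top_class.

Lemma in_top_class a : (a \in X) = [&& a \in S, T x0 a & T a x0].
Proof. by rewrite in_set andbA. Qed.

Lemma top_class_sub a : a \in X -> a \in S.
Proof. by rewrite in_top_class => /and3P[]. Qed.

Lemma top_class_x0 : x0 \in X.
Proof. by rewrite in_top_class x0S Trefl. Qed.

Lemma top_class_up a b : a \in X -> b \in S -> T a b -> b \in X.
Proof.
rewrite !in_top_class => /and3P[aS t0a ta0] bS tab.
have t0b := Ttr t0a tab; by rewrite bS t0b (x0_max bS t0b).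
Qed.

Lemma top_classT a b : a \in X -> b \in X -> T a b.
Proof. by rewrite !in_top_class => /and3P[_ _ ta0] /and3P[_ t0b _]; exact: Ttr ta0 t0b. Qed.

Lemma below_top_class a b : b \in X -> T a b -> T a x0.
Proof. by rewrite in_top_class => /and3P[_ _ tb0] tab; exact: Ttr tab tb0. Qed.

Lemma strict_ext_top_class h m : strict_ext S h m -> {in X, forall a, h a = h x0}.
Proof.
case=> _ _ _ H4 _ a aX; have aS := top_class_sub aX.
by apply/eqP; rewrite eqn_leq (H4 _ _ aS x0S (top_classT aX top_class_x0))
  (H4 _ _ x0S aS (top_classT top_class_x0 aX)).
Qed.

(* [split_top] lifts [X] to a new level of its own just above its level and
   [merge_top] merges that level into the one below; [insert_top] and
   [drop_top] add and delete [X] as a level just above its highest strict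
   predecessor. *)
Definition split_top (h : A -> nat) a := h a + ((h x0 < h a) || (a \in X)).
Definition merge_top (h : A -> nat) a := h a - (h x0 <= h a).
Definition drop_top (h : A -> nat) a := if a \in X then 0 else h a - (h x0 < h a).
Definition pred_level (g : A -> nat) := \max_(b | (b \in S :\: X) && T b x0) g b.
Definition insert_top (g : A -> nat) a :=
  if a \in X then (pred_level g).+1 else g a + (pred_level g < g a).

Definition top_shared (h : A -> nat) := [exists b, (b \in S :\: X) && (h b == h x0)].
Definition pred_below_top (h : A -> nat) :=
  [exists b, [&& b \in S, T b x0 & h b == (h x0).-1]].
Definition top_mergeable h := ~~ top_shared h && ((1 < h x0) && ~~ pred_below_top h).
Definition top_droppable h := ~~ top_shared h && ~~ ((1 < h x0) && ~~ pred_below_top h).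

Lemma top_sharedN h a : ~~ top_shared h -> a \in S -> a \notin X -> h a != h x0.
Proof.
move=> nsh aS aX; apply/negP => /eqP e; move/negP: nsh; apply; apply/existsP.
by exists a; rewrite in_setD aX aS e eqxx.
Qed.

Section SplitTop.
Variables (h : A -> nat) (m : nat).
Hypothesis Eh : strict_ext S h m.

Lemma split_top_in a : a \in X -> split_top h a = (h x0).+1.
Proof. by move=> aX; rewrite /split_top aX orbT (strict_ext_top_class Eh aX); lia. Qed.

Lemma split_top_out a : a \notin X -> split_top h a = h a + (h x0 < h a).
Proof. by move=> aX; rewrite /split_top (negbTE aX) orbF. Qed.

Lemma split_top_ext : top_shared h -> strict_ext S (split_top h) m.+1.
Proof.
case/existsP=> b1 /andP[]; rewrite in_setD => /andP[b1X b1S] /eqP hb1.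
have hX := strict_ext_top_class Eh; have [H1 H2 H3 H4 H5] := Eh.
have hx0 := H2 _ x0S.
split.
- move=> a aS; have aX : a \notin X by apply: contra aS; exact: top_class_sub.
  by rewrite split_top_out // H1.
- move=> a aS; case: (boolP (a \in X)) => aX;
    [rewrite split_top_in | rewrite split_top_out]; have := H2 _ aS; lia.
- move=> j hj; case: (ltngtP j (h x0)) => cj.
  + have [a aS ea] := H3 j ltac:(lia); exists a => //.
    have aX : a \notin X by apply/negP => aX; move: (hX _ aX); lia.
    rewrite split_top_out // ea; lia.
  + case: (ltngtP j (h x0).+1) => cj'; first lia.
      have [a aS ea] := H3 j.-1 ltac:(lia); exists a => //.
      have aX : a \notin X by apply/negP => aX; move: (hX _ aX); lia.
      rewrite split_top_out // ea; lia.
    by exists x0; rewrite // split_top_in ?top_class_x0.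
  + by exists b1; rewrite // split_top_out // hb1 ltnn cj addn0.
- move=> a b aS bS tab; case: (boolP (a \in X)) => aX.
    by rewrite !split_top_in // (top_class_up aX bS tab).
  have := H4 _ _ aS bS tab; rewrite split_top_out // /split_top; case: (b \in X); lia.
- move=> a b aS bS tab; case: (boolP (a \in X)) => aX.
    by move=> _; apply: top_classT => //; apply: top_class_up aX bS tab.
  have := H4 _ _ aS bS tab; case: (boolP (b \in X)) => bX.
    rewrite split_top_out // split_top_in //; have := hX _ bX; lia.
  by rewrite !split_top_out // => hab e; apply: H5 => //; lia.
Qed.

Lemma split_top_mergeable : top_mergeable (split_top h).
Proof.
have [_ H2 _ H4 H5] := Eh; have hx0 := H2 _ x0S.
rewrite /top_mergeable /top_shared /pred_below_top (split_top_in top_class_x0).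
apply/and3P; split; [|lia|].
- apply/existsP => -[b /andP[]]; rewrite in_setD => /andP[bX bS].
  by rewrite split_top_out //; lia.
- apply/existsP => -[b /and3P[bS tb0]] /=; case: (boolP (b \in X)) => bX.
    by rewrite split_top_in //; lia.
  rewrite split_top_out //; have := H4 _ _ bS x0S tb0 => le /eqP e.
  have e' : h b = h x0 by lia.
  by have := H5 _ _ bS x0S tb0 e' => t0b; rewrite in_top_class bS tb0 t0b in bX.
Qed.

Lemma merge_split_top : merge_top (split_top h) = h.
Proof.
apply: functional_extensionality => a; rewrite /merge_top (split_top_in top_class_x0).
case: (boolP (a \in X)) => aX; first by rewrite split_top_in // (strict_ext_top_class Eh aX); lia.
by rewrite split_top_out //; lia.
Qed.

End SplitTop.

Section MergeTop.
Variables (h : A -> nat) (m : nat).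
Hypotheses (Eh : strict_ext S h m) (Hm : top_mergeable h).

Lemma merge_top_x0 : merge_top h x0 = (h x0).-1.
Proof. by rewrite /merge_top leqnn; lia. Qed.

Lemma merge_top_ext : strict_ext S (merge_top h) m.-1.
Proof.
have [nsh /andP[gt1 npb]] := andP Hm; have [H1 H2 H3 H4 H5] := Eh.
have hx0 := H2 _ x0S.
split.
- by move=> a aS; rewrite /merge_top H1 //; lia.
- by move=> a aS; have := H2 _ aS; rewrite /merge_top; lia.
- move=> j hj; case: (ltngtP j (h x0).-1) => cj.
  + by have [a aS ea] := H3 j ltac:(lia); exists a => //; rewrite /merge_top ea; lia.
  + by have [a aS ea] := H3 j.+1 ltac:(lia); exists a => //; rewrite /merge_top ea; lia.
  + by exists x0; rewrite // merge_top_x0 cj.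
- by move=> a b aS bS tab; have := H4 _ _ aS bS tab; rewrite /merge_top; lia.
- move=> a b aS bS tab; have := H4 _ _ aS bS tab; rewrite /merge_top => le e.
  case: (ltngtP (h a) (h b)) => c; last by apply: H5.
    have ea : h a = (h x0).-1 by lia.
    have eb : h b = h x0 by lia.
    case: (boolP (b \in X)) => bX; last by move: (top_sharedN nsh bS bX); rewrite eb eqxx.
    move/negP: npb; case; apply/existsP; exists a.
    by rewrite aS (below_top_class bX tab) ea eqxx.
  lia.
Qed.

Lemma merge_top_shared : top_shared (merge_top h).
Proof.
have [_ H2 H3 _ _] := Eh; have hx0 := H2 _ x0S.
have /and3P[_ gt1 _] := Hm.
have [a aS ea] := H3 (h x0).-1 ltac:(lia).
have aX : a \notin X by apply/negP => aX; move: (strict_ext_top_class Eh aX); lia.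
apply/existsP; exists a; rewrite in_setD aS aX merge_top_x0 /merge_top ea /=.
by apply/eqP; lia.
Qed.

Lemma split_merge_top : split_top (merge_top h) = h.
Proof.
have [nsh _] := andP Hm; have [H1 H2 _ _ _] := Eh; have hx0 := H2 _ x0S.
apply: functional_extensionality => a; rewrite /split_top merge_top_x0 /merge_top.
case: (boolP (a \in X)) => aX; first by rewrite (strict_ext_top_class Eh aX) orbT; lia.
rewrite orbF; case: (boolP (a \in S)) => aS; last by rewrite H1 //; lia.
by have := top_sharedN nsh aS aX; lia.
Qed.

End MergeTop.

Lemma pred_level_ge g b : b \in S :\: X -> T b x0 -> g b <= pred_level g.
Proof.
by move=> bSX tb0; apply: (@leq_bigmax_cond _ (fun b => (b \in S :\: X) && T b x0));
  rewrite bSX tb0.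
Qed.

Section DropTop.
Variables (h : A -> nat) (m : nat).
Hypotheses (Eh : strict_ext S h m) (Hd : top_droppable h).

Lemma drop_top_out a : a \notin X -> drop_top h a = h a - (h x0 < h a).
Proof. by move=> aX; rewrite /drop_top (negbTE aX). Qed.

Lemma drop_top_ext : strict_ext (S :\: X) (drop_top h) m.-1.
Proof.
have [nsh _] := andP Hd; have [H1 H2 H3 H4 H5] := Eh.
have hX := strict_ext_top_class Eh; have hx0 := H2 _ x0S.
split.
- move=> a; rewrite in_setD negb_and negbK => /orP[aX|aS]; first by rewrite /drop_top aX.
  by rewrite /drop_top H1 //; case: (a \in X) => //; lia.
- move=> a; rewrite in_setD => /andP[aX aS]; rewrite drop_top_out //.
  by have := top_sharedN nsh aS aX; have := H2 _ aS; lia.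
- move=> j hj; have [a aS ea] := H3 (j + (h x0 <= j)) ltac:(lia).
  have aX : a \notin X by apply/negP => aX; move: (hX _ aX); lia.
  by exists a; rewrite ?in_setD ?aX // drop_top_out // ea; lia.
- move=> a b; rewrite !in_setD => /andP[aX aS] /andP[bX bS] tab.
  by have := H4 _ _ aS bS tab; rewrite !drop_top_out //; lia.
- move=> a b; rewrite !in_setD => /andP[aX aS] /andP[bX bS] tab.
  have := H4 _ _ aS bS tab; have := top_sharedN nsh aS aX; have := top_sharedN nsh bS bX.
  by rewrite !drop_top_out // => n1 n2 le e; apply: H5 => //; lia.
Qed.

Lemma pred_level_drop_top : pred_level (drop_top h) = (h x0).-1.
Proof.
have [nsh nmerge] := andP Hd; have [H1 H2 H3 H4 H5] := Eh.
have hx0 := H2 _ x0S.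
apply/eqP; rewrite eqn_leq; apply/andP; split.
  apply/bigmax_leqP => b /andP[]; rewrite in_setD => /andP[bX bS] tb0.
  by have := H4 _ _ bS x0S tb0; have := top_sharedN nsh bS bX; rewrite drop_top_out //; lia.
case: (boolP (1 < h x0)) => gt1; last by lia.
have : pred_below_top h by move: nmerge; rewrite gt1 /= negbK.
case/existsP => b /and3P[bS tb0 /eqP eb].
have bX : b \notin X by apply/negP => bX; move: (strict_ext_top_class Eh bX); lia.
have := @pred_level_ge (drop_top h) b ltac:(by rewrite in_setD bX bS) tb0.
by rewrite drop_top_out // eb; lia.
Qed.

Lemma insert_drop_top : insert_top (drop_top h) = h.
Proof.
have [nsh _] := andP Hd; have [H1 H2 _ _ _] := Eh; have hx0 := H2 _ x0S.
apply: functional_extensionality => a; rewrite /insert_top pred_level_drop_top.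
case: (boolP (a \in X)) => aX; first by rewrite (strict_ext_top_class Eh aX); lia.
rewrite drop_top_out //; case: (boolP (a \in S)) => aS; last by rewrite H1 //; lia.
by have := top_sharedN nsh aS aX; lia.
Qed.

End DropTop.

Section InsertTop.
Variables (g : A -> nat) (m : nat).
Hypothesis Eg : strict_ext (S :\: X) g m.

Lemma insert_top_in a : a \in X -> insert_top g a = (pred_level g).+1.
Proof. by move=> aX; rewrite /insert_top aX. Qed.

Lemma insert_top_out a : a \notin X -> insert_top g a = g a + (pred_level g < g a).
Proof. by move=> aX; rewrite /insert_top (negbTE aX). Qed.

Lemma pred_level_le : pred_level g <= m.
Proof. by apply/bigmax_leqP => b _; exact: strict_ext_le Eg b. Qed.

Lemma insert_top_ext : strict_ext S (insert_top g) m.+1.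
Proof.
have [H1 H2 H3 H4 H5] := Eg; have pl := pred_level_le.
have SX a : a \in S -> a \notin X -> a \in S :\: X by move=> aS aX; rewrite in_setD aX aS.
split.
- move=> a aS; have aX : a \notin X by apply: contra aS; exact: top_class_sub.
  by rewrite insert_top_out // H1 // in_setD negb_and aS orbT.
- move=> a aS; case: (boolP (a \in X)) => aX; first by rewrite insert_top_in //; lia.
  by rewrite insert_top_out //; have := H2 _ (SX _ aS aX); lia.
- move=> j hj; case: (ltngtP j (pred_level g).+1) => cj.
  + have [a] := H3 j ltac:(lia); rewrite in_setD => /andP[aX aS] ea.
    by exists a => //; rewrite insert_top_out // ea; lia.
  + have [a] := H3 j.-1 ltac:(lia); rewrite in_setD => /andP[aX aS] ea.
    by exists a => //; rewrite insert_top_out // ea; lia.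
  + by exists x0; rewrite // insert_top_in ?top_class_x0 ?cj.
- move=> a b aS bS tab; case: (boolP (a \in X)) => aX.
    by rewrite !insert_top_in // (top_class_up aX bS tab).
  case: (boolP (b \in X)) => bX.
    rewrite insert_top_out // insert_top_in //.
    by have := pred_level_ge g (SX _ aS aX) (below_top_class bX tab); lia.
  by rewrite !insert_top_out //; have := H4 _ _ (SX _ aS aX) (SX _ bS bX) tab; lia.
- move=> a b aS bS tab; case: (boolP (a \in X)) => aX.
    by move=> _; apply: top_classT => //; apply: top_class_up aX bS tab.
  case: (boolP (b \in X)) => bX.
    rewrite insert_top_out // insert_top_in //.
    by have := pred_level_ge g (SX _ aS aX) (below_top_class bX tab); lia.
  rewrite !insert_top_out // => e; have := H4 _ _ (SX _ aS aX) (SX _ bS bX) tab => le.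
  by apply: H5; rewrite ?SX //; lia.
Qed.

Lemma insert_top_droppable : top_droppable (insert_top g).
Proof.
have pl := pred_level_le; have [_ H2 _ _ _] := Eg.
rewrite /top_droppable /top_shared /pred_below_top (insert_top_in top_class_x0); apply/andP; split.
  apply/existsP => -[b /andP[]]; rewrite in_setD => /andP[bX bS].
  by rewrite insert_top_out //; lia.
rewrite negb_and negbK; case: (posnP (pred_level g)) => [->|p0] //.
have [b /andP[bSX tb0] eb] := bigmax_attained p0; rewrite -/(pred_level g) in eb.
apply/orP; right; apply/existsP; exists b.
move: (bSX); rewrite in_setD => /andP[bX bS].
by rewrite bS tb0 insert_top_out // -eb ltnn /=; apply/eqP; lia.
Qed.

Lemma drop_insert_top : drop_top (insert_top g) = g.
Proof.
have [H1 _ _ _ _] := Eg.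
apply: functional_extensionality => a; rewrite /drop_top (insert_top_in top_class_x0).
case: (boolP (a \in X)) => aX; first by rewrite H1 // in_setD aX.
by rewrite insert_top_out //; lia.
Qed.

End InsertTop.

Definition split_topF (f : FF) := ordf (split_top (natf f)).
Definition merge_topF (f : FF) := ordf (merge_top (natf f)).
Definition drop_topF (f : FF) := ordf (drop_top (natf f)).
Definition insert_topF (f : FF) := ordf (insert_top (natf f)).

Lemma sum_mergeable :
  (\sum_(f | in_ext S f && top_mergeable (natf f)) (-1) ^+ level_max S f =
   - \sum_(f | in_ext S f && top_shared (natf f)) (-1) ^+ level_max S f :> int)%R.
Proof.
apply: (sum_sign_bij (F := split_topF) (G := merge_topF)).
  move=> g /andP[/in_extP Eg Hs].
  have [E1 E2 E3] := strict_ext_ordf (split_top_ext Eg Hs).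
  rewrite /split_topF E1 E2 E3 (split_top_mergeable Eg) /merge_topF.
  by rewrite E1 (merge_split_top Eg) ordf_natf.
move=> f /andP[/in_extP Ef Hm].
have [E1 E2 _] := strict_ext_ordf (merge_top_ext Ef Hm).
rewrite /merge_topF E1 E2 (merge_top_shared Ef Hm) /split_topF.
by rewrite E1 (split_merge_top Ef Hm) ordf_natf.
Qed.

Lemma sum_droppable :
  (\sum_(f | in_ext S f && top_droppable (natf f)) (-1) ^+ level_max S f =
   - ext_sum (S :\: X) :> int)%R.
Proof.
apply: (sum_sign_bij (F := insert_topF) (G := drop_topF)).
  move=> g /in_extP Eg.
  have [E1 E2 E3] := strict_ext_ordf (insert_top_ext Eg).
  rewrite /insert_topF E1 E2 E3 (insert_top_droppable Eg) /drop_topF.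
  by rewrite E1 (drop_insert_top Eg) ordf_natf.
move=> f /andP[/in_extP Ef Hd].
have [E1 E2 _] := strict_ext_ordf (drop_top_ext Ef Hd).
rewrite /drop_topF E2 /insert_topF E1.
by rewrite (insert_drop_top Ef Hd) ordf_natf.
Qed.

Lemma ext_sum_top_class : ext_sum S = (- ext_sum (S :\: X))%R.
Proof.
rewrite -sum_droppable /ext_sum (bigID (fun f => top_shared (natf f))) /=.
rewrite [X in (_ + X)%R](bigID (fun f => (1 < natf f x0) && ~~ pred_below_top (natf f))) /=.
rewrite [X in (_ + (X + _))%R](eq_bigl (fun f => in_ext S f && top_mergeable (natf f)));
  last by move=> f; rewrite -andbA.
rewrite [X in (_ + (_ + X))%R](eq_bigl (fun f => in_ext S f && top_droppable (natf f)));
  last by move=> f; rewrite -andbA.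
by rewrite sum_mergeable addrA addrN add0r.
Qed.

Lemma cl_on_top_class : cl_on S = (cl_on (S :\: X)).+1.
Proof.
have classX x : x \in X -> [set y in S | T x y && T y x] = X.
  move=> xX; apply/setP => y; rewrite [in LHS]in_set; apply/idP/idP.
    by move=> /and3P[yS txy _]; exact: top_class_up xX yS txy.
  by move=> yX; rewrite (top_class_sub yX) !top_classT.
have classN x : x \in S :\: X ->
    [set y in S | T x y && T y x] = [set y in S :\: X | T x y && T y x].
  rewrite in_setD => /andP[xX xS]; apply/setP => y; rewrite !in_set.
  have [/andP[txy tyx]|] := boolP (T x y && T y x); last by rewrite !andbF.
  rewrite !andbT andb_idl // => yS; apply/negP => /and3P[_ t0y ty0].
  by move/negP: xX; apply; rewrite in_top_class xS (Ttr t0y tyx) (Ttr txy ty0).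
have E : [set [set y in S | T x y && T y x] | x in S] =
         X |: [set [set y in S :\: X | T x y && T y x] | x in S :\: X].
  apply/setP => C; rewrite in_setU1; apply/imsetP/orP.
    move=> [x xS ->]; case: (boolP (x \in X)) => xX; first by left; rewrite classX.
    by right; apply/imsetP; exists x; rewrite ?classN // in_setD xX xS.
  case=> [/eqP ->|/imsetP[x xSX ->]]; first by exists x0; rewrite ?classX ?top_class_x0.
  by exists x; rewrite ?classN //; move: xSX; rewrite in_setD => /andP[].
have notX : X \notin [set [set y in S :\: X | T x y && T y x] | x in S :\: X].
  apply/imsetP => -[x _ eX]; have := top_class_x0.
  by rewrite eX in_set in_setD top_class_x0.
by rewrite /cl_on E cardsU1 notX.
Qed.

End TopClass.

Lemma ext_sum_set0 : ext_sum set0 = 1%R.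
Proof.
have max0 f : level_max set0 f = 0 by rewrite /level_max big_set0.
have E0 : natf (ordf (fun _ : A => 0)) = (fun _ => 0) by apply: natf_ordf => a.
have E f : in_ext set0 f = (f == ordf (fun _ => 0)).
  apply/idP/eqP => [/in_extP[H1 _ _ _ _]|->].
    by apply: natf_inj; rewrite E0; apply: functional_extensionality => a; rewrite H1 ?inE.
  apply/in_extP; rewrite E0 max0.
  by split=> [a|a|[|j] //|a b|a b]; rewrite ?inE.
by rewrite /ext_sum (eq_bigl _ _ E) big_pred1_eq max0.
Qed.

Lemma cl_on_set0 : cl_on set0 = 0.
Proof. by rewrite /cl_on imset0 cards0. Qed.

Lemma ext_sumE (S : {set A}) : ext_sum S = ((-1) ^+ cl_on S)%R.
Proof.
move: {2}#|S| (leqnn #|S|) => n; elim: n S => [|n IH] S cardS.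
  by move: cardS; rewrite leqn0 cards_eq0 => /eqP ->; rewrite ext_sum_set0 cl_on_set0.
have [->|/exists_maximal[x0 x0S x0max]] := eqVneq S set0.
  by rewrite ext_sum_set0 cl_on_set0.
rewrite (ext_sum_top_class x0S x0max) (cl_on_top_class x0S x0max) IH ?exprS ?mulN1r //.
have sub : S :\: top_class S x0 \subset S :\ x0.
  apply/subsetP => y; rewrite in_setD => /andP[yX yS]; rewrite !inE yS andbT.
  by apply/eqP => e; move: yX; rewrite e top_class_x0.
by have := subset_leq_card sub; have := cardsD1 x0 S; rewrite x0S; lia.
Qed.
End StrictExtensions.

Section Surjections.
Variable A : finType.
Local Notation FF := {ffun A -> 'I_#|A|.+1}.

Lemma fmax_ge (f : FF) a : f a <= fmax f.
Proof. exact: (@leq_bigmax _ (fun a => val (f a)) a). Qed.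

Lemma fmax_le (f : FF) : fmax f <= #|A|.
Proof. by apply/bigmax_leqP => a _ /=; rewrite -ltnS. Qed.

Lemma is_surjP (f : FF) :
  reflect ((forall a, 0 < f a) /\ forall j, 0 < j <= fmax f -> exists a, f a = j :> nat)
          (is_surj f).
Proof.
apply: (iffP andP) => [[/forallP H1 /allP H2]|[H1 H2]]; split => //.
- move=> j hj; have : j \in iota 1 (fmax f) by rewrite mem_iota; lia.
  by move/H2/existsP => [a /eqP e]; exists a.
- by apply/forallP.
- apply/allP => j; rewrite mem_iota => hj; have [a e] := H2 j ltac:(lia).
  by apply/existsP; exists a; apply/eqP.
Qed.

Lemma fmax_level_max (f : FF) : fmax f = level_max setT f.
Proof. by apply: eq_bigl => a; rewrite in_setT. Qed.

Variable T : rel A.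

Lemma inLP (f : FF) : reflect (strict_ext T setT (natf f) (fmax f)) (inL T f).
Proof.
apply: (iffP idP).
  move=> /andP[/andP[/is_surjP[H1 H2] /forallP H3] /forallP H4]; split.
  - by move=> a; rewrite in_setT.
  - by move=> a _; rewrite H1 fmax_ge.
  - by move=> j /H2[a e]; exists a; rewrite ?in_setT.
  - by move=> a b _ _ tab; move/forallP: (H3 a) => /(_ b)/implyP; apply.
  - move=> a b _ _ tab /eqP e; move/forallP: (H4 a) => /(_ b)/implyP.
    by rewrite tab e => /(_ isT)/andP[].
move=> [_ H2 H3 H4 H5]; apply/andP; split; first (apply/andP; split).
- apply/is_surjP; split; first by move=> a; have /andP[] := H2 a (in_setT a).
  by move=> j /H3[a _ e]; exists a.
- by apply/forallP => a; apply/forallP => b; apply/implyP => tab; apply: H4.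
- apply/forallP => a; apply/forallP => b; apply/implyP => /andP[tab /eqP e].
  by rewrite tab (H5 a b).
Qed.

Lemma inLE (f : FF) : inL T f = in_ext T setT f.
Proof. by rewrite /in_ext -fmax_level_max; apply/inLP/strict_extP. Qed.

Lemma cl_cl_on : cl T = cl_on T setT.
Proof.
apply: eq_card => C; apply/imsetP/imsetP => -[x _ ->]; exists x => //;
  by apply/setP => y; rewrite !inE.
Qed.

Lemma sum_inL_sign : quasi_order T ->
  (\sum_(f : FF | inL T f) (-1) ^+ fmax f = (-1) ^+ cl T :> int)%R.
Proof.
case=> Trefl Ttr; rewrite cl_cl_on -(ext_sumE Trefl Ttr).
by apply: congr_big => // f; rewrite ?inLE ?fmax_level_max.
Qed.

End Surjections.

Section Compositions.
Variable A : finType.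
Local Notation FF := {ffun A -> 'I_#|A|.+1}.

Lemma size_comp_of (f : FF) : size (comp_of f) = fmax f.
Proof. by rewrite size_map size_iota. Qed.

Lemma nth_comp_of (f : FF) p :
  p < fmax f -> nth set0 (comp_of f) p = [set a | val (f a) == p.+1].
Proof. by move=> hp; rewrite (nth_map 0) ?size_iota // nth_iota // add1n. Qed.

Lemma comp_of_is_comp (f : FF) : is_surj f -> is_comp (comp_of f).
Proof.
move=> /is_surjP[H1 H2]; apply/and3P; split.
- apply/allP => X /mapP[j]; rewrite mem_iota => hj ->.
  by have [a e] := H2 j ltac:(lia); apply/set0Pn; exists a; rewrite inE /= e.
- rewrite pairwise_map; apply: (@sub_pairwise _ ltn).
    move=> i j /= lij; rewrite -setI_eq0; apply/eqP/setP => a; rewrite !inE /=.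
    by apply/negP => /andP[/eqP e1 /eqP e2]; lia.
  by rewrite -sorted_pairwise ?iota_ltn_sorted //; exact: ltn_trans.
- apply/eqP/setP => a; rewrite in_setT bigcup_seq; apply/bigcupP.
  exists [set b | val (f b) == val (f a)]; last by rewrite inE.
  by apply/mapP; exists (val (f a)); rewrite // mem_iota H1 add1n ltnS fmax_ge.
Qed.

Lemma eq_sum_comps (F G : seq {set A} -> int) : F =1 G -> sum_comps F = sum_comps G.
Proof. by move=> E; apply: eq_bigr => n _; apply: eq_bigr => t _; exact: E. Qed.

Lemma sum_tuple_eq (s : seq {set A}) n (Q : pred (seq {set A})) (x : seq {set A} -> int) :
  (\sum_(t : n.-tuple {set A} | Q t) (if s == t then x t else 0) =
   if (size s == n) && Q s then x s else 0)%R.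
Proof.
have [e'|ne] := boolP (size s == n); last first.
  by apply: big1 => t _; case: eqP => // est; rewrite est size_tuple eqxx in ne.
case: (boolP (Q s)) => Qs; last first.
  by apply: big1 => t Qt; case: eqP => // est; rewrite est Qt in Qs.
rewrite (bigD1 (Tuple e')) //= eqxx big1 ?addr0 // => t /andP[Qt nt].
by case: eqP => // est; move/eqP: nt; case; apply: val_inj.
Qed.

Lemma sum_comps_card (P : pred FF) (G : seq {set A} -> int) :
  (forall f, P f -> is_surj f) ->
  sum_comps (fun D => (#|[set f | P f & comp_of f == D]|%:Z * G D)%R) =
  (\sum_(f | P f) G (comp_of f))%R.
Proof.
move=> PS; rewrite /sum_comps.
have E n (t : n.-tuple {set A}) : (#|[set f | P f & comp_of f == t]|%:Z * G t =
    \sum_(f | P f) (if comp_of f == t then G t else 0))%R.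
  by rewrite -natz mulr_natl -sumr_const -big_mkcondr; apply: eq_bigl => f; rewrite inE.
under eq_bigr => n _ do (under eq_bigr => t _ do rewrite E; rewrite exchange_big /=).
rewrite exchange_big /=; apply: eq_bigr => f Pf.
under eq_bigr => n _ do rewrite sum_tuple_eq.
have hs : size (comp_of f) < #|A|.+1 by rewrite size_comp_of ltnS fmax_le.
rewrite (bigD1 (Ordinal hs)) //= eqxx comp_of_is_comp ?PS //= big1 ?addr0 // => n ne.
by case: eqP => // e; move: ne; case/negP; apply/eqP/val_inj.
Qed.

End Compositions.

Definition ncuts (c : nat -> bool) (k p : nat) : nat := \sum_(q < p) c (k + q).

Lemma ncuts0 c k : ncuts c k 0 = 0.
Proof. by rewrite /ncuts big_ord0. Qed.

Lemma ncutsSl c k p : ncuts c k p.+1 = c k + ncuts c k.+1 p.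
Proof.
rewrite /ncuts big_ord_recl addn0; congr (_ + _).
by apply: eq_bigr => i _; rewrite addSnnS.
Qed.

Lemma ncutsSr c k p : ncuts c k p.+1 = ncuts c k p + c (k + p).
Proof. by rewrite /ncuts big_ord_recr. Qed.

Lemma ncuts_le c k p : ncuts c k p <= p.
Proof. by elim: p => [|p IH]; rewrite ?ncuts0 // ncutsSr; case: (c _); lia. Qed.

Lemma ncuts_homo c k : {homo ncuts c k : p q / p <= q}.
Proof.
move=> p q /subnK <-; elim: (q - p) => [|d IH]; first by rewrite add0n.
by rewrite addSn ncutsSr; lia.
Qed.

Lemma ncuts_onto c k n r : r <= ncuts c k n -> exists2 p, p <= n & ncuts c k p = r.
Proof.
elim: n r => [|n IH] r; first by rewrite ncuts0 leqn0 => /eqP ->; exists 0; rewrite ?ncuts0.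
move=> hr; case: (leqP r (ncuts c k n)) => h.
  by have [p hp e] := IH r h; exists p => //; lia.
by exists n.+1 => //; move: hr h; rewrite ncutsSr; case: (c _) => /=; lia.
Qed.

Section Merging.
Variable A : finType.

Lemma merge_cons2 (X Y : {set A}) D c acc k :
  merge [:: X, Y & D] c acc k =
  if c k then (acc :|: X) :: merge (Y :: D) c set0 k.+1
  else merge (Y :: D) c (acc :|: X) k.+1.
Proof. by []. Qed.

Lemma merge_nil (D : seq {set A}) c acc k : size D = 0 -> merge D c acc k = [::].
Proof. by case: D. Qed.

Lemma size_merge (D : seq {set A}) c acc k : D != [::] ->
  size (merge D c acc k) = (ncuts c k (size D).-1).+1.
Proof.
elim: D acc k => [//|X [|Y D] IH] acc k _; first by rewrite ncuts0.
by rewrite merge_cons2 ncutsSl; case: (c k); rewrite /= IH.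
Qed.

Lemma has_iota0S (P : pred nat) n :
  has P (iota 0 n.+1) = P 0 || has (fun q => P q.+1) (iota 0 n).
Proof. by rewrite /= -[1]/(1 + 0) iotaDl has_map. Qed.

Lemma mem_nth_merge (D : seq {set A}) c acc k r a :
  D != [::] -> r < size (merge D c acc k) ->
  (a \in nth set0 (merge D c acc k) r) =
  ((r == 0) && (a \in acc))
  || has (fun p => (ncuts c k p == r) && (a \in nth set0 D p)) (iota 0 (size D)).
Proof.
elim: D acc k r => [//|X [|Y D] IH] acc k r _.
  by rewrite /= ltnS leqn0 => /eqP -> /=; rewrite ncuts0 in_setU orbF.
rewrite merge_cons2 [in RHS]has_iota0S ncuts0.
under [in RHS]eq_has => q do rewrite ncutsSl.
case: (c k) => /=; last first.
  move=> hr; rewrite IH // in_setU [0 == r]eq_sym.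
  by case: (r == 0); case: (a \in acc); case: (a \in X).
case: r => [_|r hr] /=; first by rewrite in_setU has_pred0 orbF.
by rewrite IH // in_set0 andbF.
Qed.

End Merging.

Section Coarsening.
Variable A : finType.
Local Notation FF := {ffun A -> 'I_#|A|.+1}.

Definition cut_of n (I : {set 'I_n}) (k : nat) : bool := [exists i in I, (val i).+1 == k].

Lemma cut_ofE n (I : {set 'I_n}) j (hj : j < n) : cut_of I (1 + j) = (Ordinal hj \in I).
Proof.
apply/existsP/idP => [[i /andP[iI /eqP e]]|iI]; last by exists (Ordinal hj); rewrite iI /=.
by rewrite (_ : Ordinal hj = i) //; apply/val_inj; move: e; rewrite add1n => -[].
Qed.

Definition coarsen_fun (f : FF) (c : nat -> bool) : FF :=
  ordf (fun a => (ncuts c 1 (f a).-1).+1).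

Definition refines (f g : FF) : bool := [forall a, forall b, (g a < g b) ==> (f a < f b)].

Lemma refinesP (f g : FF) : reflect (forall a b, g a < g b -> f a < f b) (refines f g).
Proof.
apply: (iffP forallP) => [H a b|H a]; first by move/forallP: (H a) => /(_ b)/implyP.
by apply/forallP => b; apply/implyP; exact: H.
Qed.

Lemma refines_le (f g : FF) a b : refines f g -> f a <= f b -> g a <= g b.
Proof. by move=> /refinesP fg le; rewrite leqNgt; apply/negP => /fg; lia. Qed.

Variable f : FF.
Hypothesis f_surj : is_surj f.
Local Notation n := (size (comp_of f)).-1.

Lemma coarsen_funE c a : coarsen_fun f c a = (ncuts c 1 (f a).-1).+1 :> nat.
Proof.
have /is_surjP[H1 _] := f_surj.
rewrite ffunE inordK //; have := ncuts_le c 1 (f a).-1; have := H1 a.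
by have := ltn_ord (f a); lia.
Qed.

Lemma fmax_coarsen_fun c :
  fmax (coarsen_fun f c) = if fmax f == 0 then 0 else (ncuts c 1 (fmax f).-1).+1.
Proof.
have /is_surjP[H1 H2] := f_surj.
case: eqP => [m0|m0].
  by apply/eqP; rewrite -leqn0; apply/bigmax_leqP => a _; have := H1 a; have := fmax_ge f a; lia.
apply/eqP; rewrite eqn_leq; apply/andP; split.
  apply/bigmax_leqP => a _ /=; rewrite coarsen_funE ltnS; apply: ncuts_homo.
  by have := fmax_ge f a; lia.
have [a e] := H2 (fmax f) ltac:(lia).
by have := fmax_ge (coarsen_fun f c) a; rewrite coarsen_funE e.
Qed.

Lemma coarsenE (I : {set 'I_(size (comp_of f)).-1}) :
  coarsen I = comp_of (coarsen_fun f (cut_of I)).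
Proof.
have /is_surjP[H1 _] := f_surj; have m_def := size_comp_of f.
have fm := fmax_coarsen_fun (cut_of I).
have [m0|m0] := eqVneq (fmax f) 0.
  by rewrite /coarsen merge_nil ?m_def ?m0 // [RHS]/comp_of fm m0.
have Dn : comp_of f != [::] by rewrite -size_eq0 m_def.
have sz : size (coarsen I) = (ncuts (cut_of I) 1 (fmax f).-1).+1.
  by rewrite /coarsen size_merge // (congr1 (fun n => ncuts (cut_of I) 1 n.-1) m_def).
apply: (@eq_from_nth _ set0); first by rewrite sz (size_comp_of (coarsen_fun _ _)) fm (negbTE m0).
move=> r hr; apply/setP => a; rewrite /coarsen mem_nth_merge //.
rewrite nth_comp_of; last by rewrite fm (negbTE m0) -sz.
rewrite in_set0 andbF /= inE /= coarsen_funE eqSS.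
apply/hasP/idP => [[p]|/eqP e].
  rewrite mem_iota => hp /andP[/eqP e]; rewrite nth_comp_of; last by lia.
  by rewrite inE /= => /eqP ->; rewrite /= e.
have fa_gt0 := H1 a; have fa_le := fmax_ge f a.
exists (f a).-1; first by rewrite mem_iota; lia.
rewrite e eqxx nth_comp_of; last by lia.
by rewrite inE /= prednK.
Qed.

Lemma coarsen_fun_surj c : is_surj (coarsen_fun f c).
Proof.
have /is_surjP[H1 H2] := f_surj.
apply/is_surjP; split=> [a|j]; first by rewrite coarsen_funE.
rewrite fmax_coarsen_fun; case: eqP => [m0|m0] hj; first lia.
have [p hp e] := @ncuts_onto c 1 (fmax f).-1 j.-1 ltac:(lia).
have [a ea] := H2 p.+1 ltac:(lia).
by exists a; rewrite coarsen_funE ea /= e; lia.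
Qed.

Lemma coarsen_fun_refines c : refines f (coarsen_fun f c).
Proof.
have /is_surjP[H1 _] := f_surj.
apply/refinesP => a b; rewrite !coarsen_funE ltnS => lt.
have : ~~ ((f b).-1 <= (f a).-1) by apply/negP => /(ncuts_homo c 1); lia.
by have := H1 a; have := H1 b; lia.
Qed.

Lemma coarsen_fun_inj : injective (fun I : {set 'I_n} => coarsen_fun f (cut_of I)).
Proof.
move=> I J /= e; have /is_surjP[_ H2] := f_surj.
apply/setP => i; have hi : i < (fmax f).-1 by rewrite -size_comp_of; exact: ltn_ord.
have [a ea] := H2 i.+1 ltac:(lia); have [b eb] := H2 i.+2 ltac:(lia).
have step K : coarsen_fun f (cut_of K) b = coarsen_fun f (cut_of K) a + (i \in K) :> nat.
  rewrite !coarsen_funE ea eb /= ncutsSr (cut_ofE K (ltn_ord i)).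
  by rewrite (_ : Ordinal (ltn_ord i) = i); [lia | exact: val_inj].
by move: (step I) (step J); rewrite e; case: (i \in I); case: (i \in J) => //=; lia.
Qed.

(* The cut set of [g] is read off from the pairs of consecutive [f]-levels
   that [g] separates. *)
Lemma refines_coarsen_fun g : is_surj g -> refines f g ->
  exists I : {set 'I_n}, g = coarsen_fun f (cut_of I).
Proof.
move=> /is_surjP[G1 G2] fg; have /is_surjP[H1 H2] := f_surj.
have fg_lt := refinesP _ _ fg; have fg_le a b := @refines_le f g a b fg.
pose I := [set i : 'I_n | [exists a, exists b,
             [&& f a == i.+1 :> nat, f b == i.+2 :> nat & g a < g b]]].
exists I; suff levelE j b : f b = j.+1 :> nat -> g b = (ncuts (cut_of I) 1 j).+1 :> nat.
  by apply/ffunP => a; apply/val_inj; rewrite /= coarsen_funE; apply: levelE; rewrite prednK.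
elim: j b => [|j IH] a fa; have fa_le := fmax_ge f a.
  rewrite ncuts0; apply/eqP; rewrite eqn_leq G1 andbT leqNgt; apply/negP => lt.
  have [b eb] := G2 1 ltac:(have := fmax_ge g a; lia).
  by have := fg_lt b a ltac:(lia); have := H1 b; lia.
have hj : j < n by rewrite size_comp_of; lia.
have [a' ea'] := H2 j.+1 ltac:(lia).
have ga' := IH a' ea'.
have le : g a' <= g a by apply: fg_le; lia.
rewrite ncutsSr add1n -[j.+1]add1n (cut_ofE I hj).
case: (boolP (Ordinal hj \in I)) => jI; last first.
  suff : ~~ (g a' < g a) by lia.
  apply: contra jI => lt; rewrite inE; apply/existsP; exists a'; apply/existsP; exists a.
  by rewrite /= ea' fa !eqxx lt.
move: jI; rewrite inE => /existsP[x /existsP[y /and3P[/eqP fx /eqP fy gxy]]].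
have gx : g x = g a' :> nat by apply/eqP; rewrite eqn_leq !fg_le //= fx ea'.
have gy : g y = g a :> nat by apply/eqP; rewrite eqn_leq !fg_le //= fy fa.
have : g a <= (g a').+1.
  rewrite leqNgt; apply/negP => lt2.
  have [z ez] := G2 (g a').+1 ltac:(have := fmax_ge g a; lia).
  have fz := fg_lt z a ltac:(lia).
  by have := fg_le z a' ltac:(lia); lia.
by rewrite gx gy in gxy; lia.
Qed.

Lemma card_coarsen (C : seq {set A}) :
  #|[set I : {set 'I_n} | coarsen I == C]| =
  #|[set g : FF | [&& is_surj g, refines f g & comp_of g == C]]|.
Proof.
have -> : [set g : FF | [&& is_surj g, refines f g & comp_of g == C]] =
          [set coarsen_fun f (cut_of I) | I in [set I : {set 'I_n} | coarsen I == C]].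
  apply/setP => g; rewrite inE; apply/idP/imsetP.
    move=> /and3P[gs gf gC]; have [I eI] := refines_coarsen_fun gs gf.
    by exists I; rewrite // inE coarsenE -eI.
  move=> [I]; rewrite inE coarsenE => /eqP <- ->.
  by rewrite coarsen_fun_surj coarsen_fun_refines eqxx.
by rewrite card_in_imset // => I J _ _; exact: coarsen_fun_inj.
Qed.

Lemma theta_basis_comp_of C :
  theta_basis (comp_of f) C =
  ((-1) ^+ fmax f * #|[set g : FF | [&& is_surj g, refines f g & comp_of g == C]]|%:Z)%R.
Proof. by rewrite /theta_basis card_coarsen size_comp_of. Qed.

End Coarsening.

Section PhiEhr.
Variables (A : finType) (T : rel A).
Hypothesis HT : quasi_order T.
Local Notation FF := {ffun A -> 'I_#|A|.+1}.

Definition isotone (g : FF) : bool := [forall a, forall b, T a b ==> (g a <= g b)].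

Lemma isotoneP (g : FF) : reflect (forall a b, T a b -> g a <= g b) (isotone g).
Proof.
apply: (iffP forallP) => [H a b|H a]; first by move/forallP: (H a) => /(_ b)/implyP.
by apply/forallP => b; apply/implyP; exact: H.
Qed.

Section Join.
Variable g : FF.
Hypothesis g_iso : forall a b, T a b -> g a <= g b.

Definition join_rel : rel A := fun a b => T a b || (g a < g b).

Lemma quasi_order_join : quasi_order join_rel.
Proof.
have [Trefl Ttr] := HT; split=> [a|b a c]; first by rewrite /join_rel Trefl.
rewrite /join_rel => /orP[tab|gab] /orP[tbc|gbc]; apply/orP.
- by left; apply: Ttr tab tbc.
- by right; have := g_iso tab; lia.
- by right; have := g_iso tbc; lia.
- by right; lia.
Qed.

Lemma inL_join f : inL join_rel f = inL T f && refines f g.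
Proof.
apply/inLP/andP => [[H1 H2 H3 H4 H5]|[/inLP[H1 H2 H3 H4 H5] /refinesP fg]].
  split; last first.
    apply/refinesP => a b lt; have jab : join_rel a b by rewrite /join_rel lt orbT.
    rewrite ltn_neqAle H4 ?andbT ?in_setT //; apply/eqP => /(H5 _ _ (in_setT a) (in_setT b) jab).
    by rewrite /join_rel => /orP[/g_iso|]; lia.
  apply/inLP; split => // [a b aS bS tab|a b aS bS tab e].
    by apply: H4; rewrite // /join_rel tab.
  have := H5 a b aS bS (introT orP (or_introl tab)) e.
  by rewrite /join_rel => /orP[//|lt]; have := g_iso tab; lia.
split => // a b aS bS; rewrite /join_rel => /orP[tab|lt]; first exact: H4.
  by have := fg a b lt; rewrite /natf; lia.
move=> e; rewrite (H5 a b aS bS tab e) //.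
by move=> e; have := fg a b lt; rewrite /natf in e; lia.
Qed.

Lemma cl_join : cl join_rel = cl T.
Proof.
have E x y : join_rel x y && join_rel y x = T x y && T y x.
  rewrite /join_rel; case: (boolP (T x y)) => txy /=; case: (boolP (T y x)) => tyx //=.
  - by have := g_iso txy; rewrite ltnNge => ->.
  - by have := g_iso tyx; rewrite ltnNge => ->.
  - by apply/negP => /andP[h1 h2]; have := leq_ltn_trans (ltnW h1) h2; rewrite ltnn.
apply: eq_card => S0; apply/imsetP/imsetP => -[x _ ->]; exists x => //;
  by apply/setP => y; rewrite !inE E.
Qed.

End Join.

Lemma sum_inL_refines (g : FF) :
  ((-1) ^+ cl T * \sum_(f | inL T f && refines f g) (-1) ^+ fmax f = (isotone g)%:R :> int)%R.
Proof.
have [/isotoneP g_iso|g_not_iso] := boolP (isotone g).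
  rewrite -(eq_bigl _ _ (inL_join g_iso)) sum_inL_sign; last exact: quasi_order_join.
  by rewrite cl_join // -expr2 sqrr_sign.
rewrite big_pred0 ?mulr0 // => f; apply/negP => /andP[/inLP[_ _ _ H4 _] /refinesP fg].
move/isotoneP: g_not_iso; apply => a b tab; rewrite leqNgt; apply/negP => /fg.
by have := H4 a b (in_setT a) (in_setT b) tab; rewrite /natf; lia.
Qed.

Lemma phi_ehrE C : phi_ehr T C = phi_Lp T C.
Proof.
have L_surj f : inL T f -> is_surj f by case/andP => /andP[].
rewrite /phi_ehr /theta (@eq_sum_comps _ _
  (fun D => phi T D * ((-1) ^+ cl T * theta_basis D C))%R); last first.
  by move=> D; rewrite -mulrA mulrCA.
rewrite sum_comps_card //.
have termE f : inL T f -> ((-1) ^+ cl T * theta_basis (comp_of f) C =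
    \sum_(g : FF) if [&& is_surj g, refines f g & comp_of g == C]
                  then (-1) ^+ cl T * (-1) ^+ fmax f else 0)%R.
  move=> Lf; rewrite theta_basis_comp_of ?L_surj // mulrA -natz mulr_natr -sumr_const.
  by rewrite big_mkcond; apply: eq_bigr => g _; rewrite inE.
rewrite (eq_bigr _ termE) exchange_big /phi_Lp -natz -sumr_const [RHS]big_mkcond /=.
apply: eq_bigr => g _; rewrite inE /inLp -/(isotone g).
have [/andP[gs gC]|gsC] := boolP (is_surj g && (comp_of g == C)); last first.
  rewrite big1 => [|f _]; move: gsC; case: (is_surj g); case: (comp_of g == C);
  by rewrite ?andbF.
rewrite gs gC /= andbT -mulrb -(sum_inL_refines g) mulr_sumr -big_mkcondr.
by apply: eq_bigl => f; rewrite andbT.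
Qed.

Lemma eps'_phi_Lp : eps' (phi_Lp T) = 1%R.
Proof.
have Lp_surj f : inLp T f -> is_surj f by case/andP.
pose one : FF := [ffun _ => inord 1].
have oneE a : one a = 1 :> nat.
  by rewrite ffunE inordK // ltnS; apply/card_gt0P; exists a.
have one_max : fmax one <= 1 by apply/bigmax_leqP => a _; rewrite /= oneE.
have one_Lp : inLp T one.
  apply/andP; split; last by apply/isotoneP => a b _; rewrite /= !oneE.
  apply/is_surjP; split=> [a|j hj]; first by rewrite oneE.
  have one_pos : 0 < fmax one by lia.
  have [a _ _] := bigmax_attained one_pos.
  by exists a; rewrite oneE; lia.
have small f : (size (comp_of f) == 1) || (comp_of f == [::]) = (fmax f <= 1).
  by rewrite -size_eq0 size_comp_of; case: (fmax f) => [|[|]].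
rewrite /eps' /phi_Lp (sum_comps_card (P := inLp T)) // (bigD1 one) //= small one_max.
rewrite big1 ?addr0 // => f /andP[Lf f_ne]; rewrite small; case: leqP => // f_max.
case/eqP: f_ne; have /is_surjP[f_gt0 _] := Lp_surj f Lf.
apply/ffunP => a; apply/val_inj; rewrite /= oneE.
by have := f_gt0 a; have := fmax_ge f a; move: (nat_of_ord (f a)) => x; lia.
Qed.

End PhiEhr.

Local Open Scope ring_scope.

Theorem proposition58 (A : finType) (T : rel A) (HT : quasi_order T) :
  eps' (phi_ehr T) = 1 /\
  phi_ehr T = phi_Lp T.
Proof.
have phi_ehr_Lp : phi_ehr T = phi_Lp T.
  by apply: functional_extensionality; exact: phi_ehrE.
by rewrite phi_ehr_Lp eps'_phi_Lp.
Qed.
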